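(* Let $0\le\alpha\le1$, let $a\in C(\mathbf{R})$ satisfy $\frac{a_1}{(1+|x|)^{\alpha}}\le a(x)\le \frac{a_2}{(1+|x|)^{\alpha}}$ ($a_1,a_2>0$), and let $V\in C^1(\mathbf{R})$ be bounded with $V>0$ and $xV'(x)\le0$. Let $R>0$, $[u_0,u_1]\in H^1(\mathbf{R})\times L^2(\mathbf{R})$ with supports in $\{|x|\le R\}$, and let $u\in C([0,\infty);H^1(\mathbf{R}))\cap C^1([0,\infty);L^2(\mathbf{R}))$ be the weak solution of $u_{tt}-u_{xx}+V(x)u+a(x)u_t=0$, $u(0)=u_0$, $u_t(0)=u_1$. Let $\varepsilon_1,\varepsilon_3>0$, $f(t)=\varepsilon_1(1+t)^2$ and $h(t,x)=\varepsilon_3(1+t)x\phi(x)$, where $\phi(x)=1$ for $|x|\le1$ and $\phi(x)=1/|x|$ for $|x|\ge1$. Then there exists $t_0$ such that for all $t\ge t_0$, $$f(t)E(t)+\int_{\mathbf{R}}h(t,x)u_x(t,x)u_t(t,x)\,dx\ \ge\ \frac12 f(t)E(t).$$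
   Context: The total energy is $E(t)=\frac12\big(\|u_t(t,\cdot)\|^2+\|u_x(t,\cdot)\|^2+\|\sqrt{V}\,u(t,\cdot)\|^2\big)$, with $\|\cdot\|$ the $L^2(\mathbf{R})$ norm. *)

From HB Require Import structures.
From mathcomp Require Import all_boot all_order all_algebra.
From mathcomp Require Import all_classical all_reals all_analysis.
Set Implicit Arguments. Unset Strict Implicit. Unset Printing Implicit Defensive.
Import Order.TTheory GRing.Theory Num.Theory.
Import numFieldNormedType.Exports.
Local Open Scope classical_set_scope.
Local Open Scope ring_scope.

Section Defs.
Variable R : realType.

Definition intR (f : R -> R) : R := Rintegral (@lebesgue_measure R) setT f.

Definition inL2 (f : R -> R) : Prop :=
  measurable_fun setT f /\
  (@lebesgue_measure R).-integrable setT (fun x => ((f x) ^+ 2)%:E).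

Definition sqnorm (f : R -> R) : R := intR (fun x => (f x) ^+ 2).

Definition test_fun (psi : R -> R) : Prop :=
  (forall x, derivable psi x 1) /\ continuous (derive1 psi) /\
  exists M : R, forall x, M < `|x| -> psi x = 0.

Definition weak_deriv (f g : R -> R) : Prop :=
  forall psi, test_fun psi ->
    intR (fun x => f x * derive1 psi x) = - intR (fun x => g x * psi x).

Definition inH1 (f fx : R -> R) : Prop := inL2 f /\ inL2 fx /\ weak_deriv f fx.

(* u (with weak x-derivative ux and time derivative ut, all functions of
   (t, x)) is the weak solution in C([0,oo);H^1) ∩ C^1([0,oo);L^2) of
   u_tt - u_xx + V u + a u_t = 0, u(0) = u0, u_t(0) = u1. *)
Definition weak_solution (a V u0 u1 : R -> R) (u ux ut : R -> R -> R) : Prop :=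
  (forall t, 0 <= t -> inH1 (u t) (ux t) /\ inL2 (ut t)) /\
  (forall t, 0 <= t -> forall e, 0 < e -> exists d, 0 < d /\
     forall s, 0 <= s -> `|s - t| < d ->
       sqnorm (fun x => u s x - u t x) + sqnorm (fun x => ux s x - ux t x) < e) /\
  (forall t, 0 <= t -> forall e, 0 < e -> exists d, 0 < d /\
     forall s, 0 <= s -> s != t -> `|s - t| < d ->
       sqnorm (fun x => (u s x - u t x) / (s - t) - ut t x) < e) /\
  (forall t, 0 <= t -> forall e, 0 < e -> exists d, 0 < d /\
     forall s, 0 <= s -> `|s - t| < d ->
       sqnorm (fun x => ut s x - ut t x) < e) /\
  sqnorm (fun x => u 0 x - u0 x) = 0 /\
  sqnorm (fun x => ut 0 x - u1 x) = 0 /\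
  (forall psi, test_fun psi -> forall t : R, 0 < t ->
     is_derive t (1:R) (fun s : R => intR (fun x => ut s x * psi x))
       (- intR (fun x => ux t x * derive1 psi x)
        - intR (fun x => V x * u t x * psi x)
        - intR (fun x => a x * ut t x * psi x))).

Definition energy (V : R -> R) (ux ut u : R -> R) : R :=
  2^-1 * (sqnorm ut + sqnorm ux + intR (fun x => V x * (u x) ^+ 2)).

Definition phi (x : R) : R := if `|x| <= 1 then 1 else `|x|^-1.

End Defs.

(* Since |x phi(x)| <= 1, the cross term is bounded by
   eps3 (1+t) (|u_x|^2 + |u_t|^2)/2 <= eps3 (1+t) E(t), using V >= 0.  The
   weight eps3 (1+t) grows only linearly while f(t) = eps1 (1+t)^2 grows
   quadratically, so eps3 (1+t) <= f(t)/2 once t >= 2 eps3 / eps1. *)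

From HB Require Import structures.
From mathcomp Require Import all_boot all_order all_algebra.
From mathcomp Require Import all_classical all_reals all_analysis.
From mathcomp Require Import measurable_realfun.
From mathcomp Require Import lra.
Set Implicit Arguments.
Unset Strict Implicit.
Unset Printing Implicit Defensive.
Import Order.TTheory GRing.Theory Num.Theory.
Import numFieldNormedType.Exports.
Local Open Scope classical_set_scope.
Local Open Scope ring_scope.

Section WeightedProduct.
Variable R : realType.
Local Notation mu := (@lebesgue_measure R).

Lemma normrM_le_mean_square (x y : R) : `|x * y| <= (x ^+ 2 + y ^+ 2) / 2.
Proof.
rewrite normrM -(real_normK (num_real x)) -(real_normK (num_real y)).
exact: (leif_mean_square `|x| `|y|).1.
Qed.

Lemma sqnorm_ge0 (f : R -> R) : 0 <= sqnorm f.
Proof. by apply: Rintegral_ge0 => x _; exact: sqr_ge0. Qed.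

Lemma integrable_sum_squares (f g : R -> R) : inL2 f -> inL2 g ->
  mu.-integrable setT (EFin \o (fun x => f x ^+ 2 + g x ^+ 2)).
Proof. by move=> [_ f2] [_ g2]; exact: eq_integrable (integrableD _ f2 g2). Qed.

Lemma intR_sum_squares (k : R) (f g : R -> R) : inL2 f -> inL2 g ->
  intR (fun x => k * (f x ^+ 2 + g x ^+ 2)) = k * (sqnorm f + sqnorm g).
Proof.
move=> fL2 gL2; have [[_ f2] [_ g2]] := (fL2, gL2).
by rewrite /intR RintegralZl ?RintegralD ?integrable_sum_squares.
Qed.

Lemma le_normr_intR_weighted_product (w f g : R -> R) (k : R) :
  measurable_fun setT w -> (forall x, `|w x| <= k) -> inL2 f -> inL2 g ->
  `|intR (fun x => w x * f x * g x)| <= k / 2 * (sqnorm f + sqnorm g).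
Proof.
move=> mw w_le fL2 gL2.
have k_ge0 : 0 <= k := le_trans (normr_ge0 _) (w_le 0).
have pointwise x : `|w x * f x * g x| <= k / 2 * (f x ^+ 2 + g x ^+ 2).
  rewrite -mulrA normrM mulrAC -mulrA.
  exact: ler_pM (normr_ge0 _) (normr_ge0 _) (w_le x) (normrM_le_mean_square _ _).
have dom : mu.-integrable setT (EFin \o (fun x => k / 2 * (f x ^+ 2 + g x ^+ 2))).
  exact: eq_integrable (integrableZl measurableT _ (integrable_sum_squares fL2 gL2)).
have int_wfg : mu.-integrable setT (EFin \o (fun x => w x * f x * g x)).
  apply: le_integrable dom => //.
    apply/measurable_EFinP.
    by apply: measurable_funM; [apply: measurable_funM|]; case: fL2; case: gL2.
  by move=> x _ /=; rewrite lee_fin (le_trans (pointwise x)) ?ler_norm.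
rewrite -intR_sum_squares //.
apply: le_trans (le_normr_Rintegral measurableT int_wfg) _.
by apply: le_Rintegral => //; exact: integrable_norm int_wfg.
Qed.

End WeightedProduct.

Section Phi.
Variable R : realType.

Lemma phiE (x : R) : phi x = (Num.max 1 `|x|)^-1.
Proof.
rewrite /phi; case: ifP => [x_le1|/negbT]; first by rewrite max_l // invr1.
by rewrite -ltNge => x_gt1; rewrite max_r // ltW.
Qed.

Lemma normr_mul_phi_le1 (x : R) : `|x * phi x| <= 1.
Proof.
have max_gt0 : 0 < Num.max 1 `|x| by rewrite lt_max ltr01.
rewrite phiE normrM normfV (gtr0_norm max_gt0) ler_pdivrMr // mul1r.
by rewrite le_max lexx orbT.
Qed.

Lemma continuous_phi : continuous (@phi R).
Proof.
have -> : @phi R = fun y => (Num.max 1 `|y|)^-1 by apply: funext => y; exact: phiE.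
move=> x; have max_cont : {for x, continuous (fun y : R => Num.max 1 `|y|)}.
  exact: (@continuous_max R R (fun=> 1) (fun y : R => `|y|) x (@cst_continuous _ _ _ x)
            (@norm_continuous _ _ x)).
by apply: (continuousV _ max_cont); rewrite gt_eqF // lt_max ltr01.
Qed.

End Phi.

Lemma half_sqnorms_le_energy (R : realType) (V ux ut u : R -> R) :
  (forall x, 0 <= V x) -> (sqnorm ux + sqnorm ut) / 2 <= energy V ux ut u.
Proof.
move=> V_ge0; have : 0 <= intR (fun x => V x * u x ^+ 2).
  by apply: Rintegral_ge0 => x _; rewrite mulr_ge0 ?sqr_ge0.
rewrite /energy; lra.
Qed.

Lemma linear_le_half_quadratic (R : realType) (eps1 eps3 t : R) :
  0 < eps1 -> 0 <= t -> 2 * eps3 / eps1 <= t ->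
  eps3 * (1 + t) <= 2^-1 * (eps1 * (1 + t) ^+ 2).
Proof.
move=> eps1_gt0 t_ge0; rewrite ler_pdivrMr // => t_large.
have : 2 * eps3 * (1 + t) <= t * eps1 * (1 + t) by rewrite ler_wpM2r //; lra.
rewrite expr2; nra.
Qed.

Theorem lemma2p5 (R : realType) (alpha a1 a2 : R) (a V : R -> R) (Rad : R)
  (u0 u0x u1 : R -> R) (u ux ut : R -> R -> R) (eps1 eps3 : R) :
  0 <= alpha -> alpha <= 1 ->
  continuous a -> 0 < a1 -> 0 < a2 ->
  (forall x : R, a1 / (1 + `|x|) `^ alpha <= a x /\ a x <= a2 / (1 + `|x|) `^ alpha) ->
  (forall x : R, derivable V x 1) -> continuous (derive1 V) ->
  (exists M : R, forall x, `|V x| <= M) ->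
  (forall x : R, 0 < V x) ->
  (forall x : R, x * derive1 V x <= 0) ->
  0 < Rad ->
  inH1 u0 u0x -> inL2 u1 ->
  (forall x : R, Rad < `|x| -> u0 x = 0 /\ u1 x = 0) ->
  weak_solution a V u0 u1 u ux ut ->
  0 < eps1 -> 0 < eps3 ->
  exists t0 : R, forall t : R, 0 <= t -> t0 <= t ->
    (eps1 * (1 + t) ^+ 2) * energy V (ux t) (ut t) (u t)
      + intR (fun x => eps3 * (1 + t) * x * phi x * ux t x * ut t x)
    >= 2^-1 * (eps1 * (1 + t) ^+ 2) * energy V (ux t) (ut t) (u t).
Proof.
move=> _ _ _ _ _ _ _ _ _ V_gt0 _ _ _ _ _ [sol_reg _] eps1_gt0 eps3_gt0.
exists (2 * eps3 / eps1) => t t_ge0 t_large.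
have [[_ [uxL2 _]] utL2] := sol_reg t t_ge0.
have c_le := linear_le_half_quadratic (eps3 := eps3) eps1_gt0 t_ge0 t_large.
set c := eps3 * (1 + t) in c_le *.
set E := energy V (ux t) (ut t) (u t).
have c_ge0 : 0 <= c by rewrite mulr_ge0 //; lra.
have weight_le x : `|c * x * phi x| <= c.
  by rewrite -mulrA normrM ger0_norm // ler_piMr // normr_mul_phi_le1.
have weight_meas : measurable_fun setT (fun x => c * x * phi x).
  apply: measurable_funM (continuous_measurable_fun (@continuous_phi R)).
  exact: measurable_funM.
have cross_le : `|intR (fun x => c * x * phi x * ux t x * ut t x)|
                <= c / 2 * (sqnorm (ux t) + sqnorm (ut t)) :=
  le_normr_intR_weighted_product weight_meas weight_le uxL2 utL2.
have kinetic_le : (sqnorm (ux t) + sqnorm (ut t)) / 2 <= E.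
  by apply: half_sqnorms_le_energy => x; exact: ltW.
have E_ge0 : 0 <= E.
  by apply: le_trans kinetic_le; rewrite divr_ge0 ?addr_ge0 ?sqnorm_ge0.
have cE_le : c * E <= 2^-1 * (eps1 * (1 + t) ^+ 2) * E by rewrite ler_wpM2r.
have cross_cE : c / 2 * (sqnorm (ux t) + sqnorm (ut t)) <= c * E.
  by rewrite mulrAC -mulrA ler_wpM2l.
by move: cross_le; rewrite ler_norml => /andP[cross_ge _]; lra.
Qed.
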